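(* Let $Q$ be a commutative automorphic loop of nilpotency class $3$. Then $((a,b,c),d,e)^{-1}=(e,d,(a,b,c))$ and $(a,(b,c,d),e)=(a,e,(b,c,d))((b,c,d),a,e)$ for every $a,b,c,d,e\in Q$.
   Context: A loop is a set with a binary operation such that all left and right translations $L_a:b\mapsto ab$, $R_a:b\mapsto ba$ are bijections and there is a two-sided identity $1$. The inner mapping group is the stabilizer of $1$ in the group generated by all translations; $Q$ is automorphic if all inner mappings are automorphisms. The associator $(a,b,c)$ is defined by $(ab)c=(a(bc))(a,b,c)$. The center $Z(Q)$ is the set of elements fixed by all inner mappings; $Z_0=1$, $Z_{i+1}(Q)$ is the preimage of $Z(Q/Z_i(Q))$, and $Q$ has nilpotency class $n$ if $Z_{n-1}(Q)\neq Q=Z_n(Q)$. Inverses $z^{-1}$ are two-sided inverses (automorphic loops are power-associative). *)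

Set Implicit Arguments.

(* A loop, given with its (uniquely determined) left and right divisions:
   the axioms say exactly that every L_a : b |-> a*b and R_a : b |-> b*a
   is a bijection (with inverses b |-> a \ b and b |-> b / a), and 1 is a
   two-sided identity. *)
Record loop := Loop {
  carrier :> Type;
  mul : carrier -> carrier -> carrier;
  ldiv : carrier -> carrier -> carrier;
  rdiv : carrier -> carrier -> carrier;
  one : carrier;
  mul_ldiv : forall a b, mul a (ldiv a b) = b;
  ldiv_mul : forall a b, ldiv a (mul a b) = b;
  rdiv_mul : forall a b, mul (rdiv b a) a = b;
  mul_rdiv : forall a b, rdiv (mul b a) a = b;
  one_mul : forall x, mul one x = x;
  mul_one : forall x, mul x one = x
}.

Arguments mul {l}.
Arguments ldiv {l}.
Arguments rdiv {l}.
Arguments one {l}.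

(* The multiplication group Mlt(Q): the group generated by all left and
   right translations (identity, translations, their inverses, closed
   under composition; closure under inverses follows). *)
Inductive mlt (Q : loop) : (Q -> Q) -> Prop :=
| mlt_id : mlt Q (fun x => x)
| mlt_L a : mlt Q (fun x => mul a x)
| mlt_R a : mlt Q (fun x => mul x a)
| mlt_Linv a : mlt Q (fun x => ldiv a x)
| mlt_Rinv a : mlt Q (fun x => rdiv x a)
| mlt_comp f g : mlt Q f -> mlt Q g -> mlt Q (fun x => f (g x)).

Arguments mlt {Q}.
Definition inner (Q : loop) (f : Q -> Q) : Prop := mlt f /\ f one = one.
Arguments inner {Q}.

Definition automorphic (Q : loop) : Prop :=
  forall f : Q -> Q, inner f -> forall x y, f (mul x y) = mul (f x) (f y).

Definition commutative_loop (Q : loop) : Prop := forall a b : Q, mul a b = mul b a.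

(* Associator: (ab)c = (a(bc)) (a,b,c). *)
Definition assoc (Q : loop) (a b c : Q) : Q :=
  ldiv (mul a (mul b c)) (mul (mul a b) c).

(* (two-sided, in the loops considered) inverse *)
Definition linv (Q : loop) (z : Q) : Q := ldiv z one.
Arguments linv {Q}.
Arguments assoc {Q}.

(* Z_0 = {1};  Z_{i+1} = preimage of Z(Q/Z_i),
   where Z(Q/N) = classes fixed by all inner mappings of Q/N.
   Unfolding the quotient: Mlt(Q/N) consists of the maps induced by
   elements f of Mlt(Q); such an induced map is inner in Q/N iff
   f 1 \in N, and it fixes the class xN iff f x \in xN. *)
Fixpoint upper_center (Q : loop) (i : nat) : Q -> Prop :=
  match i with
  | 0 => fun x => x = one
  | S i' => fun x =>
      forall f : Q -> Q, mlt f -> upper_center Q i' (f one) ->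
        exists n, upper_center Q i' n /\ f x = mul x n
  end.

Definition nilpotency_class (Q : loop) (n : nat) : Prop :=
  (exists x : Q, ~ upper_center Q (n - 1) x) /\ (forall x : Q, upper_center Q n x).

(* Commutativity makes every translation, hence every map of Mlt(Q), commute
   with multiplication by a central element.  If Q = Z_3(Q), comparing the
   maps y |-> (yq)r and y |-> y(qr) at p gives (pq)r = (pn)(qr) with n in
   Z_2(Q), and a second comparison shows that (p,q,r) is n times a central
   element, hence lies in Z_2(Q); comparing the two ways of
   multiplying out with an element of Z_2(Q) shows that associators with an
   entry in Z_2(Q) are central.  Both identities then follow by expanding
   products such as (xd)e and (ed)x with the associator formula, moving the
   central associators freely and using commutativity. *)

From Stdlib Require Import Setoid.
Set Implicit Arguments.

Section LoopTheory.

Variable Q : loop.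

Local Infix "*" := (@mul Q).

Lemma ldiv_self (a : Q) : ldiv a a = one.
Proof. rewrite <- (mul_one Q a) at 2. apply ldiv_mul. Qed.

Lemma rdiv_self (a : Q) : rdiv a a = one.
Proof. rewrite <- (one_mul Q a) at 1. apply mul_rdiv. Qed.

Lemma mul_left_cancel (y s t : Q) : y * s = y * t -> s = t.
Proof. intro H. rewrite <- (ldiv_mul Q y s), H. apply ldiv_mul. Qed.

Lemma mul_assoc_assoc (p q r : Q) : (p * q) * r = (p * (q * r)) * assoc p q r.
Proof. unfold assoc. rewrite mul_ldiv. reflexivity. Qed.

Lemma upper_center_one (i : nat) : upper_center Q i one.
Proof.
  destruct i as [|i]; simpl; [reflexivity|].
  intros f _ H. exists (f one). split; [exact H|]. symmetry. apply one_mul.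
Qed.

Definition central (m : Q) : Prop := upper_center Q 1 m.

Lemma central_inner_fix (m : Q) :
  central m -> forall f, mlt f -> f one = one -> f m = m.
Proof.
  intros Hm f Hf H1. destruct (Hm f Hf H1) as [n [Hn Hfm]].
  simpl in Hn. rewrite Hfm, Hn. apply mul_one.
Qed.

Lemma central_mul_assoc (m : Q) : central m -> forall x y : Q, (x * y) * m = x * (y * m).
Proof.
  intros Hm x y.
  assert (E : ldiv (x * y) (x * (y * m)) = m).
  { apply (central_inner_fix Hm (f := fun z => ldiv (x * y) (x * (y * z)))).
    - apply mlt_comp; [apply mlt_Linv|]. apply mlt_comp; apply mlt_L.
    - rewrite !mul_one. apply ldiv_self. }
  rewrite <- E at 1. rewrite mul_ldiv. reflexivity.
Qed.

Hypothesis HC : commutative_loop Q.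

Lemma central_mulAC (m : Q) : central m -> forall u a : Q, (u * m) * a = (u * a) * m.
Proof.
  intros Hm u a. rewrite (HC (u * m) a), <- (central_mul_assoc Hm), (HC a u).
  reflexivity.
Qed.

Lemma mlt_mul_central (m : Q) :
  central m -> forall f, mlt f -> forall y, f (y * m) = f y * m.
Proof.
  intros Hm f Hf. induction Hf as [| | | a | a | f g _ IHf _ IHg]; intro y.
  - reflexivity.
  - symmetry. apply central_mul_assoc; assumption.
  - apply central_mulAC; assumption.
  - rewrite <- (mul_ldiv Q a y) at 1. rewrite (central_mul_assoc Hm). apply ldiv_mul.
  - rewrite <- (rdiv_mul Q a y) at 1. rewrite <- (central_mulAC Hm). apply mul_rdiv.
  - rewrite IHg. apply IHf.
Qed.

Lemma upper_center2_mul_central (z m : Q) :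
  upper_center Q 2 z -> central m -> upper_center Q 2 (z * m).
Proof.
  intros Hz Hm f Hf H1.
  destruct (Hz f Hf H1) as [n [Hn Hfz]].
  exists n. split; [exact Hn|].
  rewrite (mlt_mul_central Hm Hf), Hfz, (central_mul_assoc Hm), (HC n m),
    <- (central_mul_assoc Hn).
  reflexivity.
Qed.

Lemma upper_center2_mlt_shift (x : Q) (F G G' : Q -> Q) :
  upper_center Q 2 x -> mlt F -> mlt G -> mlt G' -> (forall y, G (G' y) = y) ->
  G' (F one) = one -> exists n, central n /\ F x = G x * n.
Proof.
  intros Hx HF HG HG' HGG H1.
  assert (U : upper_center Q 1 ((fun y => G' (F y)) one)).
  { cbv beta. rewrite H1. apply upper_center_one. }
  destruct (Hx (fun y => G' (F y)) (mlt_comp HG' HF) U) as [n [Hn E]].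
  exists n. split; [exact Hn|].
  rewrite <- (HGG (F x)), E. apply (mlt_mul_central Hn HG).
Qed.

Lemma assoc_upper_center3 (p q r : Q) :
  upper_center Q 3 p -> upper_center Q 2 (assoc p q r).
Proof.
  intro Hp.
  assert (M : mlt (fun y => rdiv ((y * q) * r) (q * r))).
  { apply (mlt_comp (f := fun x => rdiv x (q * r)) (g := fun y => (y * q) * r));
      [apply mlt_Rinv|].
    apply (mlt_comp (f := fun x => x * r) (g := fun y => y * q)); apply mlt_R. }
  assert (U : upper_center Q 2 ((fun y => rdiv ((y * q) * r) (q * r)) one)).
  { cbv beta. rewrite one_mul, rdiv_self. apply upper_center_one. }
  destruct (Hp _ M U) as [n [Hn E]].
  assert (Epqr : (p * q) * r = (p * n) * (q * r)).
  { rewrite <- E. symmetry. apply rdiv_mul. }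
  destruct (upper_center2_mlt_shift (F := fun y => (p * y) * (q * r))
              (G := fun y => (p * (q * r)) * y)
              (G' := fun y => ldiv (p * (q * r)) y) Hn) as [m [Hm Epn]].
  - apply (mlt_comp (f := fun z => z * (q * r)) (g := fun y => p * y));
      [apply mlt_R | apply mlt_L].
  - apply mlt_L.
  - apply mlt_Linv.
  - intro y. apply mul_ldiv.
  - rewrite mul_one. apply ldiv_self.
  - simpl in Epn. unfold assoc.
    rewrite Epqr, Epn, (central_mul_assoc Hm), ldiv_mul.
    apply upper_center2_mul_central; assumption.
Qed.

Lemma assoc_upper_center2_r (x u v : Q) :
  upper_center Q 2 x -> central (assoc u v x).
Proof.
  intro Hx.
  destruct (upper_center2_mlt_shift (F := fun y => (u * v) * y)
              (G := fun y => u * (v * y)) (G' := fun y => ldiv v (ldiv u y)) Hx)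
    as [n [Hn E]].
  - apply mlt_L.
  - apply (mlt_comp (f := fun z => u * z) (g := fun y => v * y)); apply mlt_L.
  - apply (mlt_comp (f := fun z => ldiv v z) (g := fun y => ldiv u y)); apply mlt_Linv.
  - intro y. rewrite !mul_ldiv. reflexivity.
  - rewrite mul_one, ldiv_mul. apply ldiv_self.
  - unfold assoc. rewrite E, ldiv_mul. exact Hn.
Qed.

Lemma assoc_upper_center2_l (x u v : Q) :
  upper_center Q 2 x -> central (assoc x u v).
Proof.
  intro Hx.
  destruct (upper_center2_mlt_shift (F := fun y => (y * u) * v)
              (G := fun y => y * (u * v)) (G' := fun y => rdiv y (u * v)) Hx)
    as [n [Hn E]].
  - apply (mlt_comp (f := fun z => z * v) (g := fun y => y * u)); apply mlt_R.
  - apply mlt_R.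
  - apply mlt_Rinv.
  - intro y. apply rdiv_mul.
  - rewrite one_mul. apply rdiv_self.
  - unfold assoc. rewrite E, ldiv_mul. exact Hn.
Qed.

Lemma linv_assoc_upper_center2 (x d e : Q) :
  upper_center Q 2 x -> linv (assoc x d e) = assoc e d x.
Proof.
  intro Hx.
  assert (C := assoc_upper_center2_r e d Hx).
  assert (K : (x * (d * e)) * one = (x * (d * e)) * (assoc x d e * assoc e d x)).
  { rewrite mul_one, <- (central_mul_assoc C), <- mul_assoc_assoc.
    rewrite (HC (x * d) e), (HC x d), <- mul_assoc_assoc, (HC e d), (HC (d * e) x).
    reflexivity. }
  apply mul_left_cancel in K.
  unfold linv. rewrite K. apply ldiv_mul.
Qed.

Lemma assoc_mid_upper_center2 (a x e : Q) :
  upper_center Q 2 x -> assoc a x e = assoc a e x * assoc x a e.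
Proof.
  intro Hx.
  assert (C := assoc_upper_center2_l a e Hx).
  apply (mul_left_cancel (a * (x * e))).
  rewrite <- mul_assoc_assoc, (HC a x), (mul_assoc_assoc x a e), (HC x (a * e)),
    (mul_assoc_assoc a e x), (central_mul_assoc C), (HC e x).
  reflexivity.
Qed.

End LoopTheory.

Theorem lemma2p5 (Q : loop) (HC : commutative_loop Q) (HA : automorphic Q)
  (Hn : nilpotency_class Q 3) :
  forall a b c d e : Q,
    linv (assoc (assoc a b c) d e) = assoc e d (assoc a b c) /\
    assoc a (assoc b c d) e = mul (assoc a e (assoc b c d)) (assoc (assoc b c d) a e).
Proof.
  destruct Hn as [_ Z3].
  intros a b c d e. split.
  - apply (linv_assoc_upper_center2 HC), (assoc_upper_center3 HC), Z3.
  - apply (assoc_mid_upper_center2 HC), (assoc_upper_center3 HC), Z3.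
Qed.
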